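(* Let $\omega\in\mathcal C(\mathbb Z)$ satisfy $\omega*\omega=\omega$. Then the map $p_\omega:\beta\mathbb Z\to\mathcal R(p_\omega)$ is a $\mathbb Z$-retraction of $\beta\mathbb Z$ onto the proper subset $\mathcal R(p_\omega)=p_\omega(\beta\mathbb Z)$. Consequently the map $\pi_\omega: C(\beta\mathbb Z)\to C(\beta\mathbb Z)$, $\pi_\omega(f)=f\circ p_\omega$, is a $\mathbb Z$-equivariant idempotent $*$-homomorphism onto a proper subalgebra, with $\sigma(\pi_\omega)=\mathbb T$.
   Context: $\beta\mathbb Z$ is the Stone–Čech compactification of $\mathbb Z$, $\mathcal C(\mathbb Z)=\beta\mathbb Z\setminus\mathbb Z$. Let $\varphi$ be the homeomorphism of $\beta\mathbb Z$ extending $k\mapsto k+1$; $\mathbb Z$ acts on $\beta\mathbb Z$ by $m\cdot q=\varphi^{(m)}(q)$ and on $C(\beta\mathbb Z)\cong\ell^\infty(\mathbb Z)$ by $f\mapsto f(m\cdot\,\cdot)$. For $\omega\in\beta\mathbb Z$, $p_\omega$ is the unique continuous extension of $k\mapsto\varphi^{(k)}(\omega)$ to $\beta\mathbb Z$, and $\omega*q=p_\omega(q)$. A $\mathbb Z$-retraction onto a closed invariant set $Y$ is a continuous equivariant surjection $\gamma:\beta\mathbb Z\to Y$ fixing $Y$ pointwise. For a $\mathbb Z$-equivariant linear map $\pi$ and $x_\lambda=(\lambda^n)_n$, $\pi(x_\lambda)=c_\lambda x_\lambda$ and $\sigma(\pi)=\{\lambda\in\mathbb T:c_\lambda\neq0\}$.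 *)

From HB Require Import structures.
From mathcomp Require Import all_boot all_order all_algebra.
From mathcomp Require Import boolp classical_sets reals.
From mathcomp Require Import complex.
Set Implicit Arguments. Unset Strict Implicit. Unset Printing Implicit Defensive.
Import Order.TTheory GRing.Theory Num.Theory.
Local Open Scope classical_set_scope.
Local Open Scope ring_scope.

(* beta Z, realised as the set of ultrafilters on Z.  Its (Stone) topology has as base the clopen sets
   hat A = [set q | q A], A : set int.                                  *)

Definition pt := set (set int).

Definition is_ultrafilter (U : pt) : Prop :=
  [/\ U setT, ~ U set0,
      (forall A B, U A -> A `<=` B -> U B),
      (forall A B, U A -> U B -> U (A `&` B)) &
      (forall A, U A \/ U (~` A))].

Definition betaZ : set pt := [set U | is_ultrafilter U].

Definition principal (k : int) : pt := [set A | A k].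

(* the growth C(Z) = beta Z \ Z *)
Definition corona : set pt :=
  [set q | betaZ q /\ forall k : int, q <> principal k].

(* the Z-action m . q = phi^(m)(q) : image ultrafilter under n |-> n + m *)
Definition act (m : int) (q : pt) : pt := [set A | q [set n | A (n + m)]].

Definition cont_bZ (g : pt -> pt) : Prop :=
  forall q, betaZ q -> forall A, g q A ->
    exists2 B, q B & forall q', betaZ q' -> q' B -> g q' A.

Definition closed_bZ (Y : set pt) : Prop :=
  Y `<=` betaZ /\
  forall q, betaZ q -> ~ Y q ->
    exists2 B, q B & forall q', betaZ q' -> q' B -> ~ Y q'.

Definition invariant_bZ (Y : set pt) : Prop :=
  forall m q, Y q -> Y (act m q).

Definition Z_retraction (g : pt -> pt) (Y : set pt) : Prop :=
  [/\ closed_bZ Y /\ invariant_bZ Y,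
      cont_bZ g,
      (forall m q, betaZ q -> g (act m q) = act m (g q)),
      g @` betaZ = Y &
      (forall y, Y y -> g y = y)].

Definition is_p_ext (omega : pt) (p : pt -> pt) : Prop :=
  [/\ forall q, betaZ q -> betaZ (p q),
      cont_bZ p &
      forall k : int, p (principal k) = act k omega].

(* C(beta Z) : complex-valued continuous functions on beta Z.  Two such
   functions are identified when they agree on beta Z.                  *)

Definition cont_C (R : realType) (f : pt -> R[i]) : Prop :=
  forall q, betaZ q -> forall e : R[i], 0 < e ->
    exists2 B, q B & forall q', betaZ q' -> q' B -> `|f q' - f q| < e.

Definition eq_bZ (R : realType) (f g : pt -> R[i]) : Prop :=
  forall q, betaZ q -> f q = g q.

Definition actC (R : realType) (m : int) (f : pt -> R[i]) : pt -> R[i] :=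
  fun q => f (act m q).

Definition is_x_ext (R : realType) (lambda : R[i]) (x : pt -> R[i]) : Prop :=
  cont_C x /\ forall n : int, x (principal n) = lambda ^ n.

From HB Require Import structures.
From mathcomp Require Import all_boot all_order all_algebra.
From mathcomp Require Import boolp classical_sets reals.
From mathcomp Require Import complex.
Import Order.TTheory GRing.Theory Num.Theory.
Local Open Scope classical_set_scope.
Local Open Scope ring_scope.
Set Implicit Arguments. Unset Strict Implicit.

(* A continuous self-map g of beta Z is determined by its restriction to Z,
   g q being the q-limit of k |-> g k.  The maps p_omega o act m and
   act m o p_omega agree on Z, and, because omega * omega = omega, so do
   p_omega o p_omega and p_omega; hence p_omega is equivariant and
   idempotent, and its image is the closed set of its fixed points.  That set misses 0, since
   p_omega 0 = omega is non-principal, so no f o p_omega can equal the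
   indicator of {0}.  Every extension x of n |-> lambda^n satisfies
   x o p_omega = x(omega) x, as both sides send k to lambda^k x(omega). *)

Section Ultrafilters.

Implicit Types (U V : pt) (A B : set int).

Lemma uf_mono U A B : betaZ U -> U A -> A `<=` B -> U B.
Proof. by case=> _ _ + _ _; apply. Qed.

Lemma uf_setI U A B : betaZ U -> U A -> U B -> U (A `&` B).
Proof. by case=> _ _ _ + _; apply. Qed.

Lemma uf_em U A : betaZ U -> U A \/ U (~` A).
Proof. by case=> _ _ _ _; apply. Qed.

Lemma uf_nonempty U A : betaZ U -> U A -> exists k, A k.
Proof.
move=> hU hA; apply: contrapT => A0.
have [_ + _ _ _] := hU; apply; apply: uf_mono hU hA _ => k Ak.
by apply: A0; exists k.
Qed.

Lemma uf_setC U A : betaZ U -> U A -> ~ U (~` A).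
Proof.
by move=> hU hA hC; have [k []] := uf_nonempty hU (uf_setI hU hA hC).
Qed.

Lemma uf_sub_eq U V : betaZ U -> betaZ V -> U `<=` V -> U = V.
Proof.
move=> hU hV UV; apply/seteqP; split => // A VA.
by case: (uf_em A hU) => // /UV /(uf_setC hV VA).
Qed.

Lemma uf_singleton U k : betaZ U -> U [set k] -> U = principal k.
Proof.
move=> hU Uk; apply/seteqP; split => A hA /=.
  by have [j [Aj /= <-]] := uf_nonempty hU (uf_setI hU hA Uk).
by apply: uf_mono hU Uk _ => j ->.
Qed.

Lemma principal_bZ k : betaZ (principal k).
Proof.
split => //= [A B Ak /(_ _ Ak) //|A].
by case: (pselect (A k)); [left | right].
Qed.

Lemma act_bZ m U : betaZ U -> betaZ (act m U).
Proof.
move=> hU; split => /=.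
- by have [hT _ _ _ _] := hU; exact: hT.
- by move/(uf_nonempty hU) => [].
- by move=> A B hA AB; apply: uf_mono hU hA _ => n /AB.
- by move=> A B hA hB; apply: uf_mono hU (uf_setI hU hA hB) _.
- by move=> A; exact: (uf_em [set n | A (n + m)] hU).
Qed.

Lemma act_cont m : cont_bZ (act m).
Proof. by move=> U _ A hA; exists [set n | A (n + m)]. Qed.

Lemma actD m k U : act m (act k U) = act (k + m) U.
Proof.
apply/funext => A; rewrite /act /=; congr U.
by apply/funext => n /=; rewrite addrA.
Qed.

Lemma act0 U : act 0 U = U.
Proof.
apply/funext => A; rewrite /act /=; congr U.
by apply/funext => n /=; rewrite addr0.
Qed.

End Ultrafilters.

Section ContinuousSelfMaps.

Implicit Types (g h : pt -> pt) (q : pt).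

Lemma cont_bZ_comp g h : {homo h : q / betaZ q} ->
  cont_bZ g -> cont_bZ h -> cont_bZ (g \o h).
Proof.
move=> bh cg ch q hq A /= hA.
have [B hB HB] := cg _ (bh _ hq) _ hA.
have [B' hB' HB'] := ch _ hq _ hB.
by exists B' => // q' hq' /(HB' _ hq'); apply: HB; apply: bh.
Qed.

Lemma cont_bZ_limit g : {homo g : q / betaZ q} -> cont_bZ g ->
  forall q, betaZ q -> g q = [set A | q [set k | g (principal k) A]].
Proof.
move=> bg cg.
have lim A q : betaZ q -> g q A -> q [set k | g (principal k) A].
  move=> hq /(cg _ hq) [B hB HB]; apply: uf_mono hq hB _ => k.
  exact/HB/principal_bZ.
move=> q hq; apply/funext => A; apply/propext; split; first exact: lim.
move=> hA; case: (uf_em A (bg _ hq)) => // /(lim _ _ hq) hC.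
have [k [/= gkA gkC]] := uf_nonempty hq (uf_setI hq hA hC).
by case: (uf_setC (bg _ (principal_bZ k)) gkA gkC).
Qed.

Lemma cont_bZ_eq_principal g h :
  {homo g : q / betaZ q} -> {homo h : q / betaZ q} ->
  cont_bZ g -> cont_bZ h ->
  (forall k, g (principal k) = h (principal k)) ->
  forall q, betaZ q -> g q = h q.
Proof.
move=> bg bh cg ch gh q hq.
rewrite (cont_bZ_limit bg cg hq) (cont_bZ_limit bh ch hq).
by apply/funext => A; congr q; apply/funext => k /=; rewrite gh.
Qed.

Lemma closed_bZ_fixpoints g : {homo g : q / betaZ q} -> cont_bZ g ->
  closed_bZ [set q | betaZ q /\ g q = q].
Proof.
move=> bg cg; split=> [q [] //|q hq gqNq].
have [A qA gqNA] : exists2 A, q A & ~ g q A.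
  apply: contrapT => sub; apply: gqNq; split => //; apply/esym.
  apply: uf_sub_eq hq (bg _ hq) _ => A qA.
  by apply: contrapT => gqNA; apply: sub; exists A.
have [B qB HB] : exists2 B, q B & forall q', betaZ q' -> q' B -> g q' (~` A).
  by apply: (cg q hq); case: (uf_em A (bg q hq)).
exists (A `&` B); first exact: uf_setI.
move=> q' hq' q'AB [_ gq'].
have q'A : q' A by apply: uf_mono hq' q'AB _ => k [].
have q'B : q' B by apply: uf_mono hq' q'AB _ => k [].
by apply: (uf_setC hq' q'A); rewrite -gq'; apply: HB.
Qed.

End ContinuousSelfMaps.

Section ContinuousFunctions.

Variable R : realType.
Implicit Types (f h : pt -> R[i]) (q : pt).

Lemma cont_C_comp f g : {homo g : q / betaZ q} -> cont_bZ g ->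
  cont_C f -> cont_C (f \o g).
Proof.
move=> bg cg cf q hq e e0.
have [B hB HB] := cf _ (bg _ hq) _ e0.
have [B' hB' HB'] := cg _ hq _ hB.
by exists B' => // q' hq' /(HB' _ hq'); apply: HB; apply: bg.
Qed.

Lemma cont_C_scale (a : R[i]) f : cont_C f -> cont_C (fun q => a * f q).
Proof.
move=> cf q hq e e0; have [->|a0] := eqVneq a 0.
  by exists setT => [|? _ _]; [case: hq | rewrite !mul0r subrr normr0].
have na : 0 < `|a| by rewrite normr_gt0.
have [B hB HB] := cf _ hq (e / `|a|) (divr_gt0 e0 na).
exists B => // q' hq' /(HB _ hq'); rewrite -mulrBr normrM.
by rewrite -(ltr_pM2l na) mulrCA divff ?mulr1 // gt_eqF.
Qed.

Lemma cont_C_eq_principal f h : cont_C f -> cont_C h ->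
  (forall k, f (principal k) = h (principal k)) -> eq_bZ f h.
Proof.
move=> cf ch fh q hq; apply/eqP/negPn/negP => fhN.
pose e := `|f q - h q| / 2.
have e0 : 0 < e by rewrite divr_gt0 // normr_gt0 subr_eq0.
have [B1 h1 H1] := cf _ hq _ e0.
have [B2 h2 H2] := ch _ hq _ e0.
have [k [/(H1 _ (principal_bZ k)) fk /(H2 _ (principal_bZ k)) hk]] :=
  uf_nonempty hq (uf_setI hq h1 h2).
suff : `|f q - h q| < e + e by rewrite /e -splitr ltxx.
apply: le_lt_trans (ler_distD (h (principal k)) _ _) _.
by rewrite distrC -{1}fh ltrD.
Qed.

Definition indicator_bZ (A : set int) : pt -> R[i] :=
  fun q => if `[< q A >] then 1 else 0.

Lemma cont_C_indicator A : cont_C (indicator_bZ A).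
Proof.
move=> q hq e e0.
suff [B qB HB] : exists2 B, q B &
    forall q', betaZ q' -> q' B -> `[< q' A >] = `[< q A >].
  by exists B => // q' hq' /(HB _ hq'); rewrite /indicator_bZ => ->;
    rewrite subrr normr0.
case: (uf_em A hq) => [qA|qC]; [exists A | exists (~` A)] => // q' hq' q'B.
  by rewrite (asboolT qA) (asboolT q'B).
by rewrite !asboolF // => hA;
  [apply: uf_setC hq hA qC | apply: uf_setC hq' hA q'B].
Qed.

Variables (lambda : R[i]) (x : pt -> R[i]).
Hypotheses (lambda_norm : `|lambda| = 1) (x_ext : is_x_ext lambda x).

Lemma x_ext_act k q : betaZ q -> x (act k q) = lambda ^ k * x q.
Proof.
have [cx xk] := x_ext.
have lambda_unit : lambda \is a GRing.unit.
  by rewrite unitfE -normr_eq0 lambda_norm oner_eq0.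
apply: (@cont_C_eq_principal (x \o act k) (fun q => lambda ^ k * x q)).
- by apply: cont_C_comp cx => // [? /act_bZ|]; [apply | apply: act_cont].
- exact: cont_C_scale.
- by move=> n /=; rewrite -[act k _]/(principal (n + k)) !xk exprzDr // mulrC.
Qed.

Lemma x_ext_neq0 q : betaZ q -> x q != 0.
Proof.
have [cx xk] := x_ext.
move=> hq; apply/eqP => xq0.
have [B hB HB] := cx _ hq 1 ltr01.
have [k /(HB _ (principal_bZ k))] := uf_nonempty hq hB.
rewrite xk xq0 subr0; suff -> : `|lambda ^ k| = 1 by rewrite ltxx.
by case: k => n; rewrite /exprz ?normfV normrX lambda_norm expr1n ?invr1.
Qed.

End ContinuousFunctions.

Section IdempotentExtension.

Variables (omega : pt) (p : pt -> pt).
Hypothesis p_ext : is_p_ext omega p.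

Let p_bZ : {homo p : q / betaZ q}. Proof. by case: p_ext. Qed.
Let p_cont : cont_bZ p. Proof. by case: p_ext. Qed.
Let p_principal k : p (principal k) = act k omega. Proof. by case: p_ext. Qed.

Lemma p_principal0 : p (principal 0) = omega.
Proof. by rewrite p_principal act0. Qed.

Lemma p_act m q : betaZ q -> p (act m q) = act m (p q).
Proof.
apply: (@cont_bZ_eq_principal (p \o act m) (act m \o p)).
- by move=> x hx; apply: p_bZ; apply: act_bZ.
- by move=> x hx; apply: act_bZ; apply: p_bZ.
- by apply: cont_bZ_comp => // [x hx|]; [apply: act_bZ | apply: act_cont].
- by apply: cont_bZ_comp => //; apply: act_cont.
- by move=> k /=; rewrite -[act m _]/(principal (k + m)) !p_principal actD.
Qed.

Hypotheses (omega_bZ : betaZ omega) (p_omega : p omega = omega).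

Lemma p_idem q : betaZ q -> p (p q) = p q.
Proof.
apply: (@cont_bZ_eq_principal (p \o p) p) => //.
- by move=> ? /p_bZ/p_bZ.
- exact: cont_bZ_comp.
- by move=> k /=; rewrite p_principal p_act // p_omega.
Qed.

Lemma p_image_fixpoints : p @` betaZ = [set q | betaZ q /\ p q = q].
Proof.
apply/seteqP; split=> [_ [q hq <-]|q [hq pq]]; last by exists q.
by split; [apply: p_bZ | apply: p_idem].
Qed.

Lemma p_retraction : Z_retraction p (p @` betaZ).
Proof.
split => //; last by rewrite p_image_fixpoints => q [].
- split; first by rewrite p_image_fixpoints; apply: closed_bZ_fixpoints.
  by move=> m _ [q hq <-]; exists (act m q); [apply: act_bZ | apply: p_act].
- exact: p_act.
Qed.

Lemma p_image_neq_bZ : omega <> principal 0 -> p @` betaZ <> betaZ.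
Proof.
move=> omegaN0; rewrite p_image_fixpoints => fixE.
have [_] : [set q | betaZ q /\ p q = q] (principal 0).
  by rewrite fixE; apply: principal_bZ.
by rewrite p_principal0.
Qed.

Variable R : realType.

Lemma comp_p_not_onto : omega <> principal 0 ->
  exists2 g : pt -> R[i], cont_C g &
    forall f, cont_C f -> ~ eq_bZ (f \o p) g.
Proof.
move=> omegaN0; exists (indicator_bZ R [set 0]).
  exact: cont_C_indicator.
move=> f _ fpg; have := fpg _ omega_bZ; have := fpg _ (principal_bZ 0).
rewrite /= p_principal0 p_omega => -> /eqP.
have omega0 : ~ omega [set 0] by move/(uf_singleton omega_bZ).
rewrite /indicator_bZ (asboolT (_ : principal 0 [set 0])) //.
by rewrite asboolF // oner_eq0.
Qed.

Lemma comp_p_eigen (lambda : R[i]) : `|lambda| = 1 ->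
  exists2 c : R[i], c != 0 &
    forall x, is_x_ext lambda x -> eq_bZ (x \o p) (fun q => c * x q).
Proof.
move=> lambda_norm.
have [[x0 x0_ext]|noext] := pselect (exists x, is_x_ext lambda x); last first.
  by exists 1 => [|x x_ext]; [apply: oner_neq0 | case: noext; exists x].
exists (x0 omega); first exact: (x_ext_neq0 lambda_norm x0_ext omega_bZ).
move=> x x_ext; have [cx xk] := x_ext; have [cx0 x0k] := x0_ext.
have x_x0 : x omega = x0 omega.
  by apply: cont_C_eq_principal => // k; rewrite xk x0k.
apply: cont_C_eq_principal; [exact: cont_C_comp | exact: cont_C_scale |].
move=> k /=; rewrite p_principal (x_ext_act lambda_norm x_ext) //.
by rewrite x_x0 xk mulrC.
Qed.

End IdempotentExtension.

Unset Implicit Arguments.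

Theorem theorem2p13 (R : realType) (omega : pt) (p : pt -> pt) :
  corona omega ->
  is_p_ext omega p ->
  p omega = omega ->
  (* p_omega is a Z-retraction onto the proper subset R(p_omega) *)
  (Z_retraction p (p @` betaZ) /\ p @` betaZ <> betaZ) /\
  (* pi_omega f = f o p_omega on C(beta Z) *)
  let pi := fun f : pt -> R[i] => f \o p in
  [/\ (* maps C(beta Z) to C(beta Z) *)
      (forall f, cont_C f -> cont_C (pi f)) /\
      (* Z-equivariant *)
      (forall m f, cont_C f -> eq_bZ (pi (actC m f)) (actC m (pi f))),
      (* idempotent *)
      (forall f, cont_C f -> eq_bZ (pi (pi f)) (pi f)),
      (* *-homomorphism *)
      [/\ (forall (a b : R[i]) f g, cont_C f -> cont_C g ->
             eq_bZ (pi (fun q => a * f q + b * g q))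
                   (fun q => a * pi f q + b * pi g q)),
          (forall f g, cont_C f -> cont_C g ->
             eq_bZ (pi (fun q => f q * g q)) (fun q => pi f q * pi g q)) &
          (forall f, cont_C f ->
             eq_bZ (pi (fun q => (f q)^*)) (fun q => (pi f q)^*))],
      (* onto a proper subalgebra *)
      (exists2 g, cont_C g & forall f, cont_C f -> ~ eq_bZ (pi f) g) &
      (* sigma(pi_omega) = T *)
      (forall lambda : R[i], `|lambda| = 1 ->
         exists2 c : R[i], c != 0 &
           forall x, is_x_ext lambda x ->
             eq_bZ (pi x) (fun q => c * x q))].
Proof.
move=> [omega_bZ omegaN] p_ext p_omega.
have [p_bZ p_cont _] := p_ext.
split.
  split; first exact: (p_retraction p_ext omega_bZ p_omega).
  exact: (p_image_neq_bZ p_ext omega_bZ p_omega (omegaN 0)).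
move=> pi; rewrite {}/pi; split.
- split=> [f | m f _ q hq]; first exact: cont_C_comp.
  by rewrite /actC /= (p_act p_ext).
- by move=> f _ q hq; rewrite /= (p_idem p_ext).
- by [].
- exact: (comp_p_not_onto p_ext omega_bZ p_omega R (omegaN 0)).
- by move=> lambda; apply: (comp_p_eigen p_ext omega_bZ).
Qed.
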